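(* Let $F$ be a fully-connected ReLU network with node maps $F_{ij}$ and canonical polyhedral complex $\mathcal{C}(F)$. For every cell $C$ of $\mathcal{C}(F)$ and every node map $F_{ij}$, the sign of $F_{ij}$ is constant on the interior $C^\circ$ of $C$, so the sign sequence $s(C)\in\{-1,0,1\}^N$, $s_{ij}(C)=\mathrm{sgn}(F_{ij}(x))$ for $x\in C^\circ$, is well-defined; moreover the map $s$ from the set of cells of $\mathcal{C}(F)$ to $\{-1,0,1\}^N$ is injective.
   Context: Polyhedra are intersections of finitely many closed half-spaces of some $\mathbb{R}^n$ (possibly unbounded); $C^\circ$ denotes the interior of a polyhedron $C$ relative to its affine span (a point is its own interior). A polyhedral complex is a finite set of polyhedra closed under taking faces such that any two members intersect in a common face. A ReLU network of architecture $(n_0,\dots,n_m,1)$ is given by affine maps $A_i:\mathbb{R}^{n_{i-1}}\to\mathbb{R}^{n_i}$, $1\le i\le m+1$, $n_{m+1}=1$; $F_i=\mathrm{ReLU}\circ A_i$ ($i\le m$, ReLU coordinatewise), $G=A_{m+1}$, $F=G\circ F_m\circ\cdots\circ F_1$, $F_{(k)}=F_k\circ\cdots\circ F_1$ ($F_{(0)}=\mathrm{id}$). The node maps are $F_{ij}=\pi_j\circ A_i\circ F_{(i-1)}:\mathbb{R}^{n_0}\to\mathbb{R}$ for $1\le i\le m+1$, $1\le j\le n_i$; $N=n_1+\cdots+n_m+1$ is their number. $R^{(i)}$ is the polyhedral complex on $\mathbb{R}^{n_{i-1}}$ induced by the hyperplanes $\{x:\pi_jA_i(x)=0\}$, $1\le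 j\le n_i$: its cells are the nonempty intersections obtained by choosing for each $j$ one of $\{\pi_jA_i\ge0\},\{\pi_jA_i\le0\},\{\pi_jA_i=0\}$. The canonical polyhedral complex: $\mathcal{C}(F_{(1)})=R^{(1)}$, $\mathcal{C}(F_{(k)})=\{C\cap F_{(k-1)}^{-1}(R)\ne\emptyset: C\in\mathcal{C}(F_{(k-1)}), R\in R^{(k)}\}$ for $2\le k\le m+1$ (using the arrangement of $G$ at step $m+1$), and $\mathcal{C}(F)$ is the last one; it is a polyhedral complex on $\mathbb{R}^{n_0}$. *)

From HB Require Import structures.
From mathcomp Require Import all_boot all_order all_algebra.
From mathcomp Require Import boolp classical_sets reals.
Set Implicit Arguments. Unset Strict Implicit. Unset Printing Implicit Defensive.
Import Order.TTheory GRing.Theory Num.Theory.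
Local Open Scope ring_scope.
Local Open Scope classical_set_scope.

(* A ReLU network of architecture (n 0, ..., n m, n m.+1 = 1).
   Layer k.+1 (k = 0..m) is the affine map A_{k+1} x = x *m W k + b k
   from 'rV_(n k) to 'rV_(n k.+1) (row-vector convention).
   Weights for k > m are irrelevant. *)
Record relu_net (R : realType) := ReluNet {
  depth : nat;
  width : nat -> nat;
  width_out : width depth.+1 = 1%N;
  weight : forall k : nat, 'M[R]_(width k, width k.+1);
  bias : forall k : nat, 'rV[R]_(width k.+1)
}.

Section Net.
Variable R : realType.
Variable F : relu_net R.

Definition relu_vec (q : nat) (v : 'rV[R]_q) : 'rV[R]_q :=
  \row_j Num.max (v 0 j) 0.

Definition affine_layer (k : nat) (y : 'rV[R]_(width F k)) : 'rV[R]_(width F k.+1) :=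
  y *m weight F k + bias F k.
Arguments affine_layer k y : clear implicits.

Fixpoint partial_net (k : nat) : 'rV[R]_(width F 0) -> 'rV[R]_(width F k) :=
  match k with
  | 0 => fun x => x
  | k'.+1 => fun x => relu_vec (affine_layer k' (partial_net k' x))
  end.

(* Node map F_{(k+1) j} = pi_j o A_{k+1} o F_(k), for 0 <= k <= m. *)
Definition node_map (k : nat) (j : 'I_(width F k.+1)) (x : 'rV[R]_(width F 0)) : R :=
  affine_layer k (partial_net k x) 0 j.
Arguments node_map k j x : clear implicits.

Inductive side := Side_ge | Side_le | Side_eq.

Definition side_holds (s : side) (a : R) : Prop :=
  match s with
  | Side_ge => 0 <= a
  | Side_le => a <= 0
  | Side_eq => a = 0
  end.

Definition arrangement_cells (k : nat) : set (set 'rV[R]_(width F k)) :=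
  [set S | S !=set0 /\
     exists sigma : 'I_(width F k.+1) -> side,
       S = [set y | forall j, side_holds (sigma j) (affine_layer k y 0 j)]].

Arguments arrangement_cells k : clear implicits.

(* C(F_(k)); we start from C(F_(0)) = {R^{n_0}}, which gives
   C(F_(1)) = R^{(1)} as in the paper. *)
Fixpoint canonical_complex (k : nat) : set (set 'rV[R]_(width F 0)) :=
  match k with
  | 0 => [set setT]
  | k'.+1 => [set S | exists C Rc,
        canonical_complex k' C /\ arrangement_cells k' Rc /\
        S = C `&` (partial_net k' @^-1` Rc) /\ S !=set0]
  end.

Definition cells : set (set 'rV[R]_(width F 0)) := canonical_complex (depth F).+1.

End Net.
Arguments partial_net {R} F k x.
Arguments node_map {R} F k j x.
Arguments arrangement_cells {R} F k _.
Arguments canonical_complex {R} F k _.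
Arguments cells {R} F _.

Definition affine_span (R : realType) (p : nat) (S : set 'rV[R]_p) : set 'rV[R]_p :=
  [set y | exists (l : nat) (c : 'I_l -> 'rV[R]_p) (lam : 'I_l -> R),
     (forall i, S (c i)) /\ \sum_(i < l) lam i = 1 /\ y = \sum_(i < l) lam i *: c i].

Definition rel_interior (R : realType) (p : nat) (S : set 'rV[R]_p) : set 'rV[R]_p :=
  [set x | S x /\ exists e : R, 0 < e /\
     forall y, affine_span S y -> (forall j, `|y 0 j - x 0 j| < e) -> S y].

From HB Require Import structures.
From mathcomp Require Import all_boot all_order all_algebra.
From mathcomp Require Import boolp classical_sets reals.
From mathcomp Require Import ring lra.
Import Order.TTheory GRing.Theory Num.Theory.
Set Implicit Arguments. Unset Strict Implicit. Unset Printing Implicit Defensive.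
Local Open Scope ring_scope.
Local Open Scope classical_set_scope.

(* Every cell of C(F) is a sign cell: the set of inputs at which each node map
   F_kj lies on a prescribed side of 0.  On a sign cell every ReLU acts
   linearly, so the node maps respect the affine combinations that stay in the
   cell, and the cell is convex.  Hence a node map vanishing at a point of the
   relative interior vanishes on the whole cell (move slightly past that point),
   while the other node maps keep one strict sign on the relative interior.  The
   relative interior is nonempty: averaging yields a point of the cell at which
   every node map not identically zero on the cell is nonzero, and by Lipschitz
   continuity a neighbourhood of it in the affine span stays in the cell.
   Finally, if interior points of two cells have the same signs, each cell
   satisfies the sign conditions of the other, so the cells coincide. *)

Section RealFacts.
Variable R : realFieldType.
Implicit Types a b : R.

Lemma mulr_ge0_addr_eq0 a b : 0 <= a * b -> (a + b == 0) = (a == 0) && (b == 0).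
Proof.
move=> ab_ge0; apply/eqP/andP => [ab0|[/eqP-> /eqP->]]; last by rewrite addr0.
have a0 : a = 0 by apply/eqP; rewrite eq_le; apply/andP; split; nra.
by split; apply/eqP; lra.
Qed.

Lemma mul_gt0_near a b : a != 0 -> `|b - a| < `|a| -> 0 < a * b.
Proof.
move=> a_neq0; rewrite ltr_norml => /andP[lt_ba lt_ab].
case: (ltgtP 0 a) a_neq0 lt_ba lt_ab => [a_gt0|a_lt0|<-] //= _.
- by rewrite gtr0_norm //; nra.
- by rewrite ltr0_norm //; nra.
Qed.

Lemma max0_lipschitz a b : `|Num.max a 0 - Num.max b 0| <= `|a - b|.
Proof.
rewrite ler_norml; case: (lerP 0 (a - b)) => hab;
  [rewrite (ger0_norm hab) | rewrite (ltr0_norm hab)];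
  by case: (lerP 0 a) => ha; case: (lerP 0 b) => hb; apply/andP; split; lra.
Qed.

Lemma finite_common_radius (T : finType) (P : T -> R -> Prop) :
  (forall i e e', P i e -> 0 < e' <= e -> P i e') ->
  (forall i, exists2 e, 0 < e & P i e) -> exists2 e, 0 < e & forall i, P i e.
Proof.
move=> P_mono P_ex.
suff [e e_gt0 Pe] : exists2 e, 0 < e & forall i, i \in enum T -> P i e.
  by exists e => // i; apply: Pe; rewrite mem_enum.
elim: (enum T) => [|i s [e e_gt0 Pe]]; first by exists 1.
have [e' e'_gt0 Pe'] := P_ex i.
have min_gt0 : 0 < Num.min e e' by rewrite lt_min e_gt0 e'_gt0.
exists (Num.min e e') => // i'; rewrite inE => /orP[/eqP->|i's].
  by apply: P_mono Pe' _; rewrite min_gt0 ge_min lexx orbT.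
by apply: P_mono (Pe _ i's) _; rewrite min_gt0 ge_min lexx.
Qed.

End RealFacts.

Section Sides.
Variable R : realType.
Implicit Types (s : side) (a b c d : R).

Lemma side_holds0 s : side_holds s (0 : R).
Proof. by case: s => /=. Qed.

Lemma side_holds_mul_ge0 s a b : side_holds s a -> side_holds s b -> 0 <= a * b.
Proof. by case: s => /= ha hb; [exact: mulr_ge0 | exact: mulr_le0 | rewrite ha mul0r]. Qed.

Lemma side_holds_conic s a b c d : 0 <= a -> 0 <= b ->
  side_holds s c -> side_holds s d -> side_holds s (a * c + b * d).
Proof. by case: s => /= ha hb hc hd; [nra | nra | rewrite hc hd !mulr0 addr0]. Qed.

Lemma side_holds_pmul s a b : side_holds s a -> 0 < a * b -> side_holds s b.
Proof. by case: s => /= ha hab; [nra | nra | move: hab; rewrite ha mul0r ltxx]. Qed.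

Lemma side_holds_sg s a b : side_holds s a -> side_holds s b ->
  a != 0 -> b != 0 -> Num.sg a = Num.sg b.
Proof.
case: s => /= ha hb a_neq0 b_neq0.
- by rewrite !gtr0_sg // lt_def ?a_neq0 ?b_neq0.
- by rewrite !ltr0_sg // lt_def eq_sym ?a_neq0 ?b_neq0.
- by move: a_neq0; rewrite ha eqxx.
Qed.

Lemma sg_eq_side_holds s a b : Num.sg a = Num.sg b -> side_holds s a -> side_holds s b.
Proof.
case: s => /= sg_ab.
- by rewrite -sgr_ge0 sg_ab sgr_ge0.
- by rewrite -sgr_le0 sg_ab sgr_le0.
- by move=> /eqP; rewrite -sgr_eq0 sg_ab sgr_eq0 => /eqP.
Qed.

Lemma max0_sum_side s l (lam u : 'I_l -> R) :
  (forall i, side_holds s (u i)) -> side_holds s (\sum_i lam i * u i) ->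
  Num.max (\sum_i lam i * u i) 0 = \sum_i lam i * Num.max (u i) 0.
Proof.
case: s => /= hu hs.
- by rewrite max_l //; apply: eq_bigr => i _; rewrite max_l.
- by rewrite max_r // big1 // => i _; rewrite max_r ?mulr0.
- by rewrite max_r ?hs // big1 // => i _; rewrite hu max_r ?mulr0.
Qed.

End Sides.

Section GenericPoint.
Variables (R : realFieldType) (V : lmodType R) (T : finType).
Variables (C : set V) (g : T -> V -> R).
Hypothesis C_mid : forall x y, C x -> C y -> C (2^-1 *: x + 2^-1 *: y).
Hypothesis g_mid : forall i x y, C x -> C y ->
  g i (2^-1 *: x + 2^-1 *: y) = 2^-1 * (g i x + g i y).
Hypothesis g_sign : forall i x y, C x -> C y -> 0 <= g i x * g i y.

(* Averaging keeps a nonzero value nonzero because g i has a constant sign on C. *)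
Lemma exists_generic_point x0 : C x0 ->
  exists2 x, C x & forall i, (exists2 y, C y & g i y != 0) -> g i x != 0.
Proof.
move=> Cx0.
suff [x Cx gen] : exists2 x, C x &
    forall i, i \in enum T -> (exists2 y, C y & g i y != 0) -> g i x != 0.
  by exists x => // i; apply: gen; rewrite mem_enum.
elim: (enum T) => [|i s [x Cx gen]]; first by exists x0.
have [[y Cy giy_neq0] | ] := pselect (exists2 y, C y & g i y != 0); last first.
  by move=> no_y; exists x => // i'; rewrite inE => /orP[/eqP-> //|]; apply: gen.
exists (2^-1 *: x + 2^-1 *: y); first exact: C_mid.
have mid_neq0 i' : (g i' x != 0) || (g i' y != 0) -> g i' (2^-1 *: x + 2^-1 *: y) != 0.
  move=> xy_neq0; rewrite g_mid // mulf_neq0 ?invr_neq0 ?pnatr_eq0 //.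
  by rewrite mulr_ge0_addr_eq0 ?g_sign // negb_and.
move=> i'; rewrite inE => /orP[/eqP-> _|i's y_ex]; first by rewrite mid_neq0 ?giy_neq0 ?orbT.
by rewrite mid_neq0 ?gen.
Qed.

End GenericPoint.

Definition pick2 (T : Type) (a b : T) (i : 'I_2) : T := if i == ord0 then a else b.

Lemma big_ord2 (V : nmodType) (f : 'I_2 -> V) : \sum_i f i = f ord0 + f (lift ord0 ord0).
Proof. by rewrite !big_ord_recl big_ord0 addr0. Qed.

Lemma affine_span2 (R : realType) p (S : set 'rV[R]_p) (a b : R) x y :
  S x -> S y -> a + b = 1 -> affine_span S (a *: x + b *: y).
Proof.
move=> Sx Sy ab1; exists 2, (pick2 x y), (pick2 a b).
by split; [case=> -[|[|]] | rewrite !big_ord2].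
Qed.

Section Network.
Variables (R : realType) (F : relu_net R).
Local Notation input := 'rV[R]_(width F 0).

(* The side of node (k, j) is sg k j; indexing by plain naturals lets a single
   function serve all layers. *)
Definition sign_cell (sg : nat -> nat -> side) (n : nat) : set input :=
  [set y | forall k, (k < n)%N -> forall j : 'I_(width F k.+1),
      side_holds (sg k j) (node_map F k j y)].

Lemma sign_cellS sg n : sign_cell sg n.+1 =
  sign_cell sg n `&`
  [set y | forall j : 'I_(width F n.+1), side_holds (sg n j) (node_map F n j y)].
Proof.
rewrite eqEsubset; split=> y.
  by move=> Cy; split=> [k kn|]; apply: Cy; [exact: ltnW | exact: ltnSn].
move=> [Cy Cny] k; rewrite ltnS leq_eqVlt => /orP[/eqP-> //|]; exact: Cy.
Qed.

Lemma sign_cell_le sg m n : (m <= n)%N -> sign_cell sg n `<=` sign_cell sg m.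
Proof. by move=> mn y Cy k km; apply: Cy; exact: leq_trans km mn. Qed.

Lemma eq_sign_cell sg1 sg2 n : (forall k j, (k < n)%N -> sg1 k j = sg2 k j) ->
  sign_cell sg1 n = sign_cell sg2 n.
Proof.
move=> eq_sg; rewrite eqEsubset; split=> y Cy k kn j; have := Cy k kn j;
  by rewrite eq_sg.
Qed.

Lemma canonical_complex_sign_cell k C :
  canonical_complex F k C -> exists sg, C = sign_cell sg k.
Proof.
elim: k C => [|k IH] C /=.
  by move=> ->; exists (fun _ _ => Side_ge); rewrite eqEsubset; split.
move=> [C' [_ [/IH[sg ->] [[_ [tau ->]] [-> _]]]]].
pose tau' n := odflt Side_ge (omap tau (insub n)).
pose sg' k' n := if k' == k then tau' n else sg k' n.
exists sg'; rewrite sign_cellS (@eq_sign_cell sg' sg); last first.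
  by move=> k' j k'k; rewrite /sg' ltn_eqF.
by congr (_ `&` _); rewrite /sg' eqxx /tau'; apply/seteqP; split=> y /= Cy j;
  have := Cy j; rewrite valK.
Qed.

Lemma cells_sign_cell C :
  cells F C -> exists2 sg, C = sign_cell sg (depth F).+1 & C !=set0.
Proof.
move=> cellC; have [sg eC] := canonical_complex_sign_cell cellC.
by exists sg => //; case: cellC => [C' [Rc [_ [_ [_ ?]]]]].
Qed.

Lemma affine_layer_comb k l (lam : 'I_l -> R) (v : 'I_l -> 'rV[R]_(width F k)) :
  \sum_i lam i = 1 ->
  affine_layer (\sum_i lam i *: v i) = \sum_i lam i *: affine_layer (v i).
Proof.
move=> lam1; rewrite /affine_layer mulmx_suml.
under [in RHS]eq_bigr => i _ do rewrite scalerDr scalemxAl.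
by rewrite big_split /= -scaler_suml lam1 scale1r.
Qed.

(* On a sign cell every ReLU acts linearly, so the network commutes with the
   affine combinations that stay inside the cell. *)
Lemma partial_net_comb sg k l (lam : 'I_l -> R) (c : 'I_l -> input) :
  \sum_i lam i = 1 -> (forall i, sign_cell sg k (c i)) ->
  sign_cell sg k (\sum_i lam i *: c i) ->
  partial_net F k (\sum_i lam i *: c i) = \sum_i lam i *: partial_net F k (c i).
Proof.
move=> lam1; elim: k => [//|k IH]; rewrite !sign_cellS => Cc [Cz Cnz] /=.
rewrite IH => [|i|//]; last by have [] := Cc i.
rewrite affine_layer_comb //; apply/rowP => j; rewrite mxE !summxE.
under eq_bigr => i _ do rewrite mxE.
under [RHS]eq_bigr => i _ do rewrite 2!mxE.
apply: (max0_sum_side (s := sg k j)) => [i|]; first by have [_] := Cc i; apply.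
have := Cnz j; rewrite /node_map IH => [|i|//]; last by have [] := Cc i.
by rewrite affine_layer_comb // summxE; under eq_bigr => i _ do rewrite mxE.
Qed.

Lemma node_map_comb sg k j l (lam : 'I_l -> R) (c : 'I_l -> input) :
  \sum_i lam i = 1 -> (forall i, sign_cell sg k (c i)) ->
  sign_cell sg k (\sum_i lam i *: c i) ->
  node_map F k j (\sum_i lam i *: c i) = \sum_i lam i * node_map F k j (c i).
Proof.
move=> lam1 Cc Cz; rewrite /node_map (partial_net_comb lam1 Cc Cz) affine_layer_comb // summxE.
by apply: eq_bigr => i _; rewrite mxE.
Qed.

Lemma node_map_comb2 sg k j (a b : R) x y :
  a + b = 1 -> sign_cell sg k x -> sign_cell sg k y -> sign_cell sg k (a *: x + b *: y) ->
  node_map F k j (a *: x + b *: y) = a * node_map F k j x + b * node_map F k j y.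
Proof.
move=> ab1 Cx Cy Cz.
have := @node_map_comb sg k j 2 (pick2 a b) (pick2 x y).
by rewrite !big_ord2; apply=> // i; rewrite /pick2; case: ifP.
Qed.

Lemma sign_cell_conv sg n (a b : R) x y : 0 <= a -> 0 <= b -> a + b = 1 ->
  sign_cell sg n x -> sign_cell sg n y -> sign_cell sg n (a *: x + b *: y).
Proof.
move=> a_ge0 b_ge0 ab1; elim: n => [//|n IH]; rewrite !sign_cellS => -[Cx Cnx] [Cy Cny].
split=> [|j]; first exact: IH.
by rewrite (node_map_comb2 j ab1 Cx Cy (IH Cx Cy)); apply: side_holds_conic.
Qed.

Definition layer_bound k : R := \sum_i \sum_j `|weight F k i j|.

Lemma layer_bound_ge0 k : 0 <= layer_bound k.
Proof. by apply: sumr_ge0 => i _; apply: sumr_ge0. Qed.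

Lemma affine_layer_lipschitz k (d : R) (u v : 'rV[R]_(width F k)) :
  0 <= d -> (forall i, `|v 0 i - u 0 i| <= d) ->
  forall j, `|affine_layer v 0 j - affine_layer u 0 j| <= layer_bound k * d.
Proof.
move=> d_ge0 uv_le j.
have -> : affine_layer v 0 j - affine_layer u 0 j =
    \sum_i (v 0 i - u 0 i) * weight F k i j.
  rewrite /affine_layer !mxE opprD addrACA subrr addr0 -sumrB.
  by apply: eq_bigr => i _; rewrite mulrBl.
apply: le_trans (ler_norm_sum _ _ _) _.
rewrite /layer_bound mulr_suml; apply: ler_sum => i _; rewrite normrM mulrC.
apply: ler_pM => //; first by rewrite (bigD1 j) //= lerDl sumr_ge0.
Qed.

Lemma prod_layer_bound_ge0 k : 0 <= \prod_(i < k) layer_bound i.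
Proof. by apply: prodr_ge0 => i _; exact: layer_bound_ge0. Qed.

Lemma partial_netS_entry k x j :
  partial_net F k.+1 x 0 j = Num.max (node_map F k j x) 0.
Proof. by rewrite /= mxE. Qed.

Lemma partial_net_lipschitz k (x y : input) (d : R) :
  0 <= d -> (forall i, `|y 0 i - x 0 i| <= d) ->
  forall j, `|partial_net F k y 0 j - partial_net F k x 0 j|
              <= (\prod_(i < k) layer_bound i) * d.
Proof.
move=> d_ge0 xy_le; elim: k => [|k IH] j; first by rewrite big_ord0 mul1r.
rewrite !partial_netS_entry; apply: le_trans (max0_lipschitz _ _) _.
rewrite big_ord_recr /= mulrAC mulrC.
exact: affine_layer_lipschitz (mulr_ge0 (prod_layer_bound_ge0 k) d_ge0) IH _.
Qed.

Lemma node_map_lipschitz k j (x y : input) (d : R) :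
  0 <= d -> (forall i, `|y 0 i - x 0 i| <= d) ->
  `|node_map F k j y - node_map F k j x| <= (\prod_(i < k.+1) layer_bound i) * d.
Proof.
move=> d_ge0 xy_le; rewrite big_ord_recr /= mulrAC mulrC.
apply: affine_layer_lipschitz (mulr_ge0 (prod_layer_bound_ge0 k) d_ge0) _ _.
exact: partial_net_lipschitz.
Qed.

Lemma node_map_mul_gt0_near k j (x : input) : node_map F k j x != 0 ->
  exists2 e, 0 < e & forall y : input, (forall i, `|y 0 i - x 0 i| < e) ->
    0 < node_map F k j x * node_map F k j y.
Proof.
move=> fx_neq0; have L_ge0 := prod_layer_bound_ge0 k.+1.
set L := \prod_(i < k.+1) layer_bound i in L_ge0 *.
have fx_gt0 : 0 < `|node_map F k j x| by rewrite normr_gt0.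
have e_gt0 : 0 < `|node_map F k j x| / (L + 1) by rewrite divr_gt0 // ltr_wpDl.
exists (`|node_map F k j x| / (L + 1)) => // y y_near; apply: mul_gt0_near => //.
apply: le_lt_trans (node_map_lipschitz j (ltW e_gt0) (fun i => ltW (y_near i))) _.
by rewrite -/L mulrA ltr_pdivrMr ?ltr_wpDl //; nra.
Qed.

(* Moving from x slightly away from w keeps us in the cell, and the node map,
   which is affine along that line and zero at x, must then change sign unless it
   vanishes at w. *)
Lemma rel_interior_node_map_eq0 sg n k j x : (k < n)%N ->
  rel_interior (sign_cell sg n) x -> node_map F k j x = 0 ->
  forall w, sign_cell sg n w -> node_map F k j w = 0.
Proof.
move=> kn [Cx [e [e_gt0 x_int]]] fx0 w Cw.
pose M : R := 1 + \sum_i `|x 0 i - w 0 i|.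
have M_gt0 : 0 < M by rewrite ltr_pwDl // sumr_ge0.
pose t := e / M.
have t_gt0 : 0 < t by rewrite divr_gt0.
pose z := (1 + t) *: x + (- t) *: w.
have Cz : sign_cell sg n z.
  apply: x_int => [|i]; first by apply: affine_span2 => //; ring.
  rewrite !mxE.
  have -> : (1 + t) * x 0 i + - t * w 0 i - x 0 i = t * (x 0 i - w 0 i) by ring.
  have xw_le : `|x 0 i - w 0 i| <= M - 1.
    by rewrite /M addrAC subrr add0r (bigD1 i) //= lerDl sumr_ge0.
  have -> : e = t * M by rewrite /t divfK ?gt_eqF.
  by rewrite normrM gtr0_norm // ltr_pM2l //; lra.
have Ck := @sign_cell_le sg _ _ (ltnW kn).
have fz : node_map F k j z = - t * node_map F k j w.
  have t1 : (1 + t) + - t = 1 by ring.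
  by rewrite (node_map_comb2 j t1 (Ck _ Cx) (Ck _ Cw) (Ck _ Cz)) fx0 mulr0 add0r.
have := side_holds_mul_ge0 (Cz k kn j) (Cw k kn j).
rewrite fz -mulrA mulNr oppr_ge0 pmulr_rle0 // => fw2_le0.
by apply/eqP; rewrite -sqrf_eq0 eq_le fw2_le0 sqr_ge0.
Qed.

Lemma sign_cell_generic_point sg n x0 : sign_cell sg n x0 ->
  exists2 x, sign_cell sg n x & forall k, (k < n)%N -> forall j,
    (exists2 y, sign_cell sg n y & node_map F k j y != 0) -> node_map F k j x != 0.
Proof.
move=> Cx0; pose node := {k : 'I_n & 'I_(width F k.+1)}.
pose g (p : node) := node_map F (tag p) (tagged p).
have Cle (p : node) : sign_cell sg n `<=` sign_cell sg (tag p).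
  exact/sign_cell_le/ltnW.
have half1 : 2^-1 + 2^-1 = 1 :> R by lra.
have C_mid x y : sign_cell sg n x -> sign_cell sg n y ->
    sign_cell sg n (2^-1 *: x + 2^-1 *: y).
  by move=> Cx Cy; apply: sign_cell_conv => //; lra.
have g_mid p x y : sign_cell sg n x -> sign_cell sg n y ->
    g p (2^-1 *: x + 2^-1 *: y) = 2^-1 * (g p x + g p y).
  move=> Cx Cy; rewrite mulrDr.
  exact: node_map_comb2 half1 (Cle p _ Cx) (Cle p _ Cy) (Cle p _ (C_mid _ _ Cx Cy)).
have g_sign p x y : sign_cell sg n x -> sign_cell sg n y -> 0 <= g p x * g p y.
  by move=> Cx Cy; apply: side_holds_mul_ge0 (Cx _ (ltn_ord _) _) (Cy _ (ltn_ord _) _).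
have [x Cx gen] := exists_generic_point C_mid g_mid g_sign Cx0.
exists x => // k kn j; exact: (gen (Tagged (fun k : 'I_n => 'I_(width F k.+1))
                                      (j : 'I_(width F (Ordinal kn).+1)))).
Qed.

Lemma node_maps_mul_gt0_near n (x : input) : exists2 e, 0 < e &
  forall k, (k < n)%N -> forall j, node_map F k j x != 0 ->
  forall y : input, (forall i, `|y 0 i - x 0 i| < e) ->
    0 < node_map F k j x * node_map F k j y.
Proof.
pose node := {k : 'I_n & 'I_(width F k.+1)}.
pose g (p : node) := node_map F (tag p) (tagged p).
have [e e_gt0 near] : exists2 e, 0 < e & forall p, g p x != 0 ->
    forall y : input, (forall i, `|y 0 i - x 0 i| < e) -> 0 < g p x * g p y.
  apply: finite_common_radius => [p e e' Pe /andP[_ e'_le] gx_neq0 y y_near|p].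
    by apply: Pe => // i; apply: lt_le_trans e'_le.
  have [gx0|/node_map_mul_gt0_near[e e_gt0 Pe]] := eqVneq (g p x) 0.
    by exists 1 => //; rewrite gx0 eqxx.
  by exists e.
exists e => // k kn j; exact: (near (Tagged (fun k : 'I_n => 'I_(width F k.+1))
                                       (j : 'I_(width F (Ordinal kn).+1)))).
Qed.

Lemma rel_interior_sign_cell_neq0 sg n :
  sign_cell sg n !=set0 -> rel_interior (sign_cell sg n) !=set0.
Proof.
move=> [x0 /sign_cell_generic_point[x Cx gen]].
have [e e_gt0 near] := node_maps_mul_gt0_near n x.
exists x; split => //; exists e; split => // _ [l [c [lam [Cc [lam1 ->]]]]] y_near.
suff : forall k, (k <= n)%N -> sign_cell sg k (\sum_i lam i *: c i) by apply.
elim=> [//|k IH] kn; rewrite sign_cellS; split=> [|j]; first exact/IH/ltnW.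
have [fx0|fx_neq0] := eqVneq (node_map F k j x) 0; last first.
  exact: side_holds_pmul (Cx k kn j) (near k kn j fx_neq0 _ y_near).
have Cck i : sign_cell sg k (c i) by apply: sign_cell_le (ltnW kn) _ (Cc i).
rewrite (node_map_comb j lam1 Cck (IH (ltnW kn))) big1 => [|i _]; first exact: side_holds0.
apply/eqP; rewrite mulf_eq0 orbC; apply/orP; left.
apply: contraT => fc_neq0; have := gen k kn j; rewrite fx0 eqxx; apply.
by exists (c i).
Qed.

Lemma rel_interior_sign_cell_sg sg n k j x y : (k < n)%N ->
  rel_interior (sign_cell sg n) x -> rel_interior (sign_cell sg n) y ->
  Num.sg (node_map F k j x) = Num.sg (node_map F k j y).
Proof.
move=> kn x_int y_int.
have [fx0|fx_neq0] := eqVneq (node_map F k j x) 0.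
  by rewrite fx0 (rel_interior_node_map_eq0 kn x_int fx0 y_int.1).
have [fy0|fy_neq0] := eqVneq (node_map F k j y) 0.
  by move: fx_neq0; rewrite (rel_interior_node_map_eq0 kn y_int fy0 x_int.1) eqxx.
exact: side_holds_sg (x_int.1 k kn j) (y_int.1 k kn j) fx_neq0 fy_neq0.
Qed.

Lemma rel_interior_sign_cell_sub sg1 sg2 n x1 x2 :
  rel_interior (sign_cell sg1 n) x1 -> sign_cell sg2 n x2 ->
  (forall k, (k < n)%N -> forall j, Num.sg (node_map F k j x1) = Num.sg (node_map F k j x2)) ->
  sign_cell sg1 n `<=` sign_cell sg2 n.
Proof.
move=> x1_int C2x2 same_sg w C1w k kn j.
have [fx0|fx_neq0] := eqVneq (node_map F k j x1) 0.
  by rewrite (rel_interior_node_map_eq0 kn x1_int fx0 C1w); exact: side_holds0.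
have [fw0|fw_neq0] := eqVneq (node_map F k j w) 0; first by rewrite fw0; exact: side_holds0.
apply: sg_eq_side_holds (C2x2 k kn j).
by rewrite -same_sg // (side_holds_sg (x1_int.1 k kn j) (C1w k kn j)).
Qed.

End Network.

(* Nodes (i, j), 1 <= i <= m+1, are indexed here by k = i - 1 : 'I_(m+1)
   and j : 'I_(n_{k+1}); s_{ij}(C) = Num.sg (F_{ij} x) for x in C°. *)
Theorem theorem14 (R : realType) (F : relu_net R) :
  (forall C, cells F C ->
     rel_interior C !=set0 /\
     (forall (k : 'I_(depth F).+1) (j : 'I_(width F k.+1)) (x y : 'rV[R]_(width F 0)),
        rel_interior C x -> rel_interior C y ->
        Num.sg (node_map F k j x) = Num.sg (node_map F k j y))) /\
  (forall C1 C2 x1 x2, cells F C1 -> cells F C2 ->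
     rel_interior C1 x1 -> rel_interior C2 x2 ->
     (forall (k : 'I_(depth F).+1) (j : 'I_(width F k.+1)),
        Num.sg (node_map F k j x1) = Num.sg (node_map F k j x2)) ->
     C1 = C2).
Proof.
split=> [C /cells_sign_cell[sg -> C_neq0] | C1 C2 x1 x2].
  split=> [|k j x y]; first exact: rel_interior_sign_cell_neq0.
  exact: rel_interior_sign_cell_sg (ltn_ord k).
move=> /cells_sign_cell[sg1 -> _] /cells_sign_cell[sg2 -> _] x1_int x2_int same_sg.
rewrite eqEsubset; split.
  apply: rel_interior_sign_cell_sub x1_int x2_int.1 _ => k kn j.
  exact: (same_sg (Ordinal kn)).
apply: rel_interior_sign_cell_sub x2_int x1_int.1 _ => k kn j.
by rewrite (same_sg (Ordinal kn)).
Qed.
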